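(* (Hammock Lemma) Let $\tilde f,f,g\in\breve{\mathcal D}$ and $c:=\int f/\int g$ satisfy $g\lhd f$, $\tilde f\le f$ and $\tilde f(x)\le\tilde g(x):=g(x/c)$ for all $x\in[0,1]$. Then $\int Tf-\int Tg<1-\int\tilde f/\int f$.
   Context: $\int f:=\int_0^1f(x)\,dx$. $\breve{\mathcal D}$: the set of continuous, convex, strictly decreasing $f\colon[0,1]\to[0,1]$ with $f(0)=1$, $f(1)=0$; for such $f$, $f^*=f^{-1}$ and $(Tf)(x):=\frac{\int_x^1f^{-1}}{\int f}$. For $f$ and $a>0$, $f_{[a]}(x):=f(ax)$ on $[0,\frac1a]$; for $b>0$, $f_{[a]}-bg$ is considered on $[0,\min\{1,\frac1a\}]$. Sign switches: for continuous $\Delta\colon[c_0,d_0]\to\mathbb R$, a closed subinterval $[c',d']$ with $c_0<c'\le d'<d_0$ and $\Delta([c',d'])=\{0\}$ is a sign switch if there is $\delta\in(0,\min\{c'-c_0,d_0-d'\}]$ with $\Delta(c'-x)\Delta(d'+x)<0$ for all $x\in(0,\delta]$; $\chi\Delta$ is their number. Crossing number $\chi(f,g):=\sup\{\chi(f_{[a]}-bg):a,b>0\}$. Domination $g\lhd f$: $\chi(f,g)=2$ and $g\le f$ pointwise. *)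

From Stdlib Require Import Reals List ClassicalEpsilon.
From Coquelicot Require Import Coquelicot.
Open Scope R_scope.

(* Functions are total R -> R; only their values on the relevant
   closed intervals matter. *)

Definition inD (f : R -> R) : Prop :=
  (forall x, 0 <= x <= 1 ->
     filterlim f (within (fun y => 0 <= y <= 1) (locally x)) (locally (f x))) /\
  (forall x, 0 <= x <= 1 -> 0 <= f x <= 1) /\
  (forall x y t, 0 <= x <= 1 -> 0 <= y <= 1 -> 0 <= t <= 1 ->
     f (t * x + (1 - t) * y) <= t * f x + (1 - t) * f y) /\
  (forall x y, 0 <= x <= 1 -> 0 <= y <= 1 -> x < y -> f y < f x) /\
  f 0 = 1 /\ f 1 = 0.

Definition finv (f : R -> R) (y : R) : R :=
  epsilon (inhabits 0) (fun x => 0 <= x <= 1 /\ f x = y).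

Definition T (f : R -> R) (x : R) : R :=
  RInt (finv f) x 1 / RInt f 0 1.

Definition fscale (f : R -> R) (a : R) (x : R) : R := f (a * x).

Definition sign_switch (D : R -> R) (c0 d0 c' d' : R) : Prop :=
  c0 < c' <= d' /\ d' < d0 /\
  (forall y, c' <= y <= d' -> D y = 0) /\
  exists delta, 0 < delta /\ delta <= Rmin (c' - c0) (d0 - d') /\
    forall x, 0 < x <= delta -> D (c' - x) * D (d' + x) < 0.

Definition has_switches (D : R -> R) (c0 d0 : R) (n : nat) : Prop :=
  exists l : list (R * R)%type, NoDup l /\ List.length l = n%nat /\
    List.Forall (fun p => sign_switch D c0 d0 (fst p) (snd p)) l.

(* crossing number chi(f,g) = sup { chi(f_[a] - b g) : a, b > 0 },
   an element of N u {+oo}, computed as a supremum in Rbar, where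
   f_[a] - b g is considered on [0, min(1, 1/a)]. *)
Definition crossing (f g : R -> R) : Rbar :=
  Lub_Rbar (fun r => exists (n : nat) (a b : R), 0 < a /\ 0 < b /\ r = INR n /\
     has_switches (fun x => fscale f a x - b * g x) 0 (Rmin 1 (/ a)) n).

Definition dominated (g f : R -> R) : Prop :=
  crossing f g = Finite 2 /\ (forall x, 0 <= x <= 1 -> g x <= f x).

(* Write [h_f] for [finv f].  Since [int f = int h_f] and, integrating by parts,
   [int T f = int y h_f(y) dy / int f], with [c = int f / int g] the claim becomes
   [int y (h_f - c h_g) < int (h_f - h_ft)].  The hypotheses say [h_ft <= min (h_f, c h_g)],
   and [y (h_f - c h_g) <= h_f - min (h_f, c h_g)] on [[0,1]], strictly where [h_f <> c h_g].
   If [h_f = c h_g] everywhere, then [c = 1] (look at [y = 0]) and [f = g], so [chi (f, f) = 2].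
   This is impossible: as [f] is convex, [r x = f (a x) / f x] has a right continuous right
   derivative, so [r] increases or decreases strictly on small pieces; two sign switches of
   [f (a .) - b f], together with the values of [r] at the ends, give three sign changes of
   [r - b], and a nearby level is then crossed cleanly three times. *)

From Stdlib Require Import Reals Lra Psatz List ClassicalEpsilon Classical.
From Coquelicot Require Import Coquelicot.
Open Scope R_scope.

Lemma continuity_pt_eps (k : R -> R) x :
  continuity_pt k x <->
  forall eps, 0 < eps -> exists d, 0 < d /\
    forall y, Rabs (y - x) < d -> Rabs (k y - k x) < eps.
Proof.
  split.
  - intros H eps He. destruct (H eps He) as [d [Hd H']]. exists d; split; auto.
    intros y Hy. destruct (Req_dec y x) as [->|Hne].
    + unfold Rminus; rewrite Rplus_opp_r, Rabs_R0; lra.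
    + apply (H' y). split; [split; [exact I|auto]|]. exact Hy.
  - intros H eps He. destruct (H eps He) as [d [Hd H']]. exists d; split; auto.
    intros y [_ Hy]. apply H'. exact Hy.
Qed.

Lemma continuity_pt_cst (c x : R) : continuity_pt (fun _ => c) x.
Proof. apply continuity_pt_const. intros u v; reflexivity. Qed.

Definition continuous_on01 (k : R -> R) : Prop :=
  forall x, 0 <= x <= 1 -> forall eps, 0 < eps -> exists d, 0 < d /\
    forall y, 0 <= y <= 1 -> Rabs (y - x) < d -> Rabs (k y - k x) < eps.

Lemma continuous_on01_within (k : R -> R) :
  (forall x, 0 <= x <= 1 ->
     filterlim k (within (fun y => 0 <= y <= 1) (locally x)) (locally (k x))) ->
  continuous_on01 k.
Proof.
  intros H x Hx eps He.
  destruct (proj1 (filterlim_locally k (k x)) (H x Hx) (mkposreal eps He)) as [d Hd].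
  exists d; split; [apply cond_pos|].
  intros y Hy Hyx. apply (Hd y); [exact Hyx | exact Hy].
Qed.

Definition clamp01 (x : R) := Rmax 0 (Rmin 1 x).

Lemma clamp01_in x : 0 <= clamp01 x <= 1.
Proof. unfold clamp01, Rmax, Rmin; repeat destruct Rle_dec; lra. Qed.

Lemma clamp01_id x : 0 <= x <= 1 -> clamp01 x = x.
Proof. unfold clamp01, Rmax, Rmin; repeat destruct Rle_dec; lra. Qed.

Lemma clamp01_lipschitz x y : Rabs (clamp01 x - clamp01 y) <= Rabs (x - y).
Proof.
  unfold clamp01, Rmax, Rmin, Rabs; repeat destruct Rle_dec; repeat destruct Rcase_abs; lra.
Qed.

(* Constant outside [[0,1]], so that integrands become continuous on all of [R]. *)
Definition ext01 (k : R -> R) (y : R) := k (clamp01 y).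

Lemma ext01_eq k y : 0 <= y <= 1 -> ext01 k y = k y.
Proof. intros Hy. unfold ext01. rewrite clamp01_id; auto. Qed.

Lemma ext01_continuity_pt k : continuous_on01 k -> forall y, continuity_pt (ext01 k) y.
Proof.
  intros Hk y. apply continuity_pt_eps. intros eps He.
  destruct (Hk (clamp01 y) (clamp01_in y) eps He) as [d [Hd H]].
  exists d; split; auto. intros z Hz. apply H; [apply clamp01_in|].
  pose proof (clamp01_lipschitz z y). lra.
Qed.

Lemma RInt_ext01 k : RInt (ext01 k) 0 1 = RInt k 0 1.
Proof.
  apply RInt_ext. intros x Hx. rewrite Rmin_left, Rmax_right in Hx by lra.
  apply ext01_eq; lra.
Qed.

(** * Decreasing homeomorphisms of [[0,1]] *)

Definition decr_homeo (f : R -> R) : Prop :=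
  continuous_on01 f /\
  (forall x y, 0 <= x <= 1 -> 0 <= y <= 1 -> x < y -> f y < f x) /\
  f 0 = 1 /\ f 1 = 0.

Lemma inD_decr_homeo f : inD f -> decr_homeo f.
Proof.
  intros (Hc & _ & _ & Hd & H0 & H1). split; [apply continuous_on01_within; exact Hc|].
  auto.
Qed.

Section DecreasingHomeomorphism.
Variable f : R -> R.
Hypothesis Hf : decr_homeo f.

Lemma decr_cont : continuous_on01 f.
Proof. apply Hf. Qed.
Lemma decr_lt x y : 0 <= x <= 1 -> 0 <= y <= 1 -> x < y -> f y < f x.
Proof. apply Hf. Qed.
Lemma decr_0 : f 0 = 1.
Proof. apply Hf. Qed.
Lemma decr_1 : f 1 = 0.
Proof. apply Hf. Qed.

Lemma decr_le x y : 0 <= x <= 1 -> 0 <= y <= 1 -> x <= y -> f y <= f x.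
Proof.
  intros Hx Hy Hxy. destruct (Req_dec x y) as [->|Hne]; [lra|].
  left; apply decr_lt; auto; lra.
Qed.

Lemma decr_range x : 0 <= x <= 1 -> 0 <= f x <= 1.
Proof.
  intros Hx. rewrite <- decr_0, <- decr_1 at 1.
  split; apply decr_le; lra.
Qed.

Lemma decr_pos x : 0 <= x < 1 -> 0 < f x.
Proof. intros Hx. rewrite <- decr_1. apply decr_lt; lra. Qed.

Lemma decr_inj x y : 0 <= x <= 1 -> 0 <= y <= 1 -> f x = f y -> x = y.
Proof.
  intros Hx Hy Hxy. destruct (Rtotal_order x y) as [H|[H|H]]; auto.
  - pose proof (decr_lt x y); lra.
  - pose proof (decr_lt y x); lra.
Qed.

Lemma decr_continuity_pt x : 0 < x < 1 -> continuity_pt f x.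
Proof.
  intros Hx. apply continuity_pt_eps. intros eps He.
  destruct (decr_cont x ltac:(lra) eps He) as [d [Hd H]].
  exists (Rmin d (Rmin x (1 - x))). split; [repeat apply Rmin_glb_lt; lra|].
  intros y Hy. pose proof (Rmin_l d (Rmin x (1 - x))). pose proof (Rmin_r d (Rmin x (1 - x))).
  pose proof (Rmin_l x (1 - x)). pose proof (Rmin_r x (1 - x)).
  apply Rabs_def2 in Hy. apply H; [lra | apply Rabs_def1; lra].
Qed.

Lemma decr_surj y : 0 <= y <= 1 -> exists x, 0 <= x <= 1 /\ f x = y.
Proof.
  intros Hy.
  assert (Hc : forall z, continuous (ext01 f) z).
  { intro z. apply continuity_pt_filterlim, ext01_continuity_pt, decr_cont. }
  destruct (IVT_gen_consistent (ext01 f) 0 1 y Hc) as [x [Hx Hfx]].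
  { rewrite !ext01_eq, decr_0, decr_1 by lra.
    rewrite Rmin_right, Rmax_left by lra. exact Hy. }
  rewrite Rmin_left, Rmax_right in Hx by lra.
  exists x; split; auto. rewrite <- ext01_eq; auto.
Qed.

Lemma finv_spec y : 0 <= y <= 1 -> 0 <= finv f y <= 1 /\ f (finv f y) = y.
Proof. intros Hy. unfold finv. apply epsilon_spec, decr_surj, Hy. Qed.

Lemma finv_f x : 0 <= x <= 1 -> finv f (f x) = x.
Proof.
  intros Hx. destruct (finv_spec (f x) (decr_range x Hx)) as [H1 H2].
  apply decr_inj; auto.
Qed.

Lemma finv_le y z : 0 <= y <= 1 -> 0 <= z <= 1 -> y <= z -> finv f z <= finv f y.
Proof.
  intros Hy Hz Hyz. destruct (finv_spec y Hy) as [A1 A2]. destruct (finv_spec z Hz) as [B1 B2].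
  apply Rnot_lt_le. intros Hlt. pose proof (decr_lt _ _ A1 B1 Hlt). lra.
Qed.

Lemma finv_0 : finv f 0 = 1.
Proof. rewrite <- decr_1. apply finv_f; lra. Qed.

Lemma finv_cont : continuous_on01 (finv f).
Proof.
  intros y0 Hy0 eps He. destruct (finv_spec y0 Hy0) as [Hx0 Hfx0].
  set (x0 := finv f y0) in *.
  assert (Lo : exists d, 0 < d /\ forall y, 0 <= y <= 1 -> y < y0 + d -> x0 - eps < finv f y).
  { destruct (Rlt_dec (x0 - eps) 0) as [Hneg|Hnneg].
    - exists 1. split; [lra|]. intros y Hy _. pose proof (proj1 (finv_spec y Hy)). lra.
    - exists (f (x0 - eps) - y0). split; [pose proof (decr_lt (x0 - eps) x0); lra|].
      intros y Hy Hlt. destruct (finv_spec y Hy) as [Hx Hfx].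
      apply Rnot_le_lt. intros Hle. pose proof (decr_le (finv f y) (x0 - eps)). lra. }
  assert (Hi : exists d, 0 < d /\ forall y, 0 <= y <= 1 -> y0 - d < y -> finv f y < x0 + eps).
  { destruct (Rlt_dec 1 (x0 + eps)) as [Hbig|Hsmall].
    - exists 1. split; [lra|]. intros y Hy _. pose proof (proj1 (finv_spec y Hy)). lra.
    - exists (y0 - f (x0 + eps)). split; [pose proof (decr_lt x0 (x0 + eps)); lra|].
      intros y Hy Hlt. destruct (finv_spec y Hy) as [Hx Hfx].
      apply Rnot_le_lt. intros Hle. pose proof (decr_le (x0 + eps) (finv f y)). lra. }
  destruct Lo as [d1 [Hd1 Lo]]. destruct Hi as [d2 [Hd2 Hi]].
  exists (Rmin d1 d2). split; [apply Rmin_glb_lt; auto|].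
  intros y Hy Hyd. pose proof (Rmin_l d1 d2). pose proof (Rmin_r d1 d2).
  apply Rabs_def2 in Hyd. apply Rabs_def1.
  - pose proof (Hi y Hy ltac:(lra)). lra.
  - pose proof (Lo y Hy ltac:(lra)). lra.
Qed.

End DecreasingHomeomorphism.

(** * Integrals *)

Lemma ex_RInt_cont (k : R -> R) a b : (forall x, continuity_pt k x) -> ex_RInt k a b.
Proof.
  intros Hk. apply (@ex_RInt_continuous R_CompleteNormedModule). intros.
  apply continuity_pt_filterlim, Hk.
Qed.

Lemma RInt_Chasles_cont (k : R -> R) a b c : (forall x, continuity_pt k x) ->
  RInt k a b + RInt k b c = RInt k a c.
Proof. intros Hk. apply (RInt_Chasles k a b c); apply ex_RInt_cont, Hk. Qed.

Section ContinuousIntegrands.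
Variables k1 k2 : R -> R.
Hypothesis Hk1 : forall x, continuity_pt k1 x.
Hypothesis Hk2 : forall x, continuity_pt k2 x.

Lemma RInt_le_cont a b : a <= b -> (forall t, a < t < b -> k1 t <= k2 t) ->
  RInt k1 a b <= RInt k2 a b.
Proof.
  intros Hab H. apply RInt_le; auto; apply ex_RInt_cont; auto.
Qed.

Lemma RInt_lt_at a b t0 : a < t0 < b -> (forall t, a < t < b -> k1 t <= k2 t) ->
  k1 t0 < k2 t0 -> RInt k1 a b < RInt k2 a b.
Proof.
  intros Ht0 Hle Hlt.
  assert (Hdiff : continuity_pt (fun y => k2 y - k1 y) t0) by (apply continuity_pt_minus; auto).
  destruct (proj1 (continuity_pt_eps _ t0) Hdiff (k2 t0 - k1 t0) ltac:(lra)) as [d [Hd Hdd]].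
  set (e := Rmin (d / 2) (Rmin ((t0 - a) / 2) ((b - t0) / 2))).
  assert (He : 0 < e /\ e <= d / 2 /\ e <= (t0 - a) / 2 /\ e <= (b - t0) / 2).
  { unfold e, Rmin; repeat destruct Rle_dec; lra. }
  rewrite <- (RInt_Chasles_cont k1 a (t0 - e) b), <- (RInt_Chasles_cont k1 (t0 - e) (t0 + e) b),
    <- (RInt_Chasles_cont k2 a (t0 - e) b), <- (RInt_Chasles_cont k2 (t0 - e) (t0 + e) b) by auto.
  assert (A1 : RInt k1 a (t0 - e) <= RInt k2 a (t0 - e))
    by (apply RInt_le_cont; [lra | intros; apply Hle; lra]).
  assert (A3 : RInt k1 (t0 + e) b <= RInt k2 (t0 + e) b)
    by (apply RInt_le_cont; [lra | intros; apply Hle; lra]).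
  assert (A2 : RInt k1 (t0 - e) (t0 + e) < RInt k2 (t0 - e) (t0 + e)).
  { apply RInt_lt; [lra | intros; apply continuity_pt_filterlim; auto
                        | intros; apply continuity_pt_filterlim; auto |].
    intros x Hx. specialize (Hdd x ltac:(apply Rabs_def1; lra)).
    apply Rabs_def2 in Hdd. lra. }
  lra.
Qed.

End ContinuousIntegrands.

Lemma RInt_bounds_cont (k : R -> R) a b lo hi : a <= b -> (forall x, continuity_pt k x) ->
  (forall t, a < t < b -> lo <= k t <= hi) -> (b - a) * lo <= RInt k a b <= (b - a) * hi.
Proof.
  intros Hab Hk H.
  assert (Hconst : forall c, RInt (fun _ => c) a b = (b - a) * c)
    by (intros; rewrite RInt_const; reflexivity).
  split; rewrite <- Hconst; apply RInt_le_cont; auto using continuity_pt_cst;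
    intros t Ht; apply H; auto.
Qed.

Lemma RInt_le01 (k1 k2 : R -> R) : continuous_on01 k1 -> continuous_on01 k2 ->
  (forall x, 0 <= x <= 1 -> k1 x <= k2 x) -> RInt k1 0 1 <= RInt k2 0 1.
Proof.
  intros H1 H2 Hle. rewrite <- (RInt_ext01 k1), <- (RInt_ext01 k2).
  apply RInt_le_cont; [apply ext01_continuity_pt; auto | apply ext01_continuity_pt; auto | lra |].
  intros t Ht. rewrite !ext01_eq by lra. apply Hle. lra.
Qed.

Section InverseIntegral.
Variable f : R -> R.
Hypothesis Hf : decr_homeo f.

Let F := ext01 f.
Let H := ext01 (finv f).
Let F_cont : forall x, continuity_pt F x := ext01_continuity_pt f (decr_cont f Hf).
Let H_cont : forall x, continuity_pt H x := ext01_continuity_pt _ (finv_cont f Hf).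

(* [L] is the lower Riemann sum of [f] on the grid [i/n], [i < k]; the same staircase bounds
   the area under [finv f] above the level [f x]. *)
Lemma staircase (n k : nat) : (0 < n)%nat -> (k <= n)%nat ->
  let N := INR n in let x := INR k / N in exists L,
  L <= RInt F 0 x <= L + (1 - f x) / N /\
  L - x * f x <= RInt H (f x) 1 <= L - x * f x + (1 - f x) / N.
Proof.
  intros Hn. pose proof (lt_0_INR n Hn) as HN. cbv zeta.
  induction k as [|k IH]; intros Hk.
  - exists 0. replace (INR 0 / INR n) with 0 by (simpl; unfold Rdiv; ring).
    rewrite (decr_0 f Hf), !RInt_point. change zero with 0. unfold Rdiv. rewrite Rminus_diag. lra.
  - destruct IH as [L [H1 H2]]; [lia|].
    set (x := INR k / INR n) in *. set (x' := INR (S k) / INR n).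
    assert (Hx' : x' = x + 1 / INR n) by (unfold x, x'; rewrite S_INR; field; lra).
    assert (Hx01 : 0 <= x' <= 1 /\ 0 <= x).
    { assert (INR (S k) <= INR n) by (apply le_INR; exact Hk).
      unfold x', x. split; [split|].
      - apply Rdiv_le_0_compat; [apply pos_INR | lra].
      - apply (Rmult_le_reg_r (INR n)); [lra|].
        unfold Rdiv. rewrite Rmult_assoc, Rinv_l by lra. lra.
      - apply Rdiv_le_0_compat; [apply pos_INR | lra]. }
    assert (0 < 1 / INR n) by (apply Rdiv_lt_0_compat; lra).
    assert (Hr := decr_range f Hf x ltac:(lra)). assert (Hr' := decr_range f Hf x' ltac:(lra)).
    assert (Hfx : f x' <= f x) by (apply (decr_le f Hf); lra).
    exists (L + f x' / INR n).
    assert (A : (x' - x) * f x' <= RInt F x x' <= (x' - x) * f x).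
    { apply RInt_bounds_cont; auto; [lra|]. intros t Ht. unfold F. rewrite ext01_eq by lra.
      split; apply (decr_le f Hf); lra. }
    assert (B : (f x - f x') * x <= RInt H (f x') (f x) <= (f x - f x') * x').
    { apply RInt_bounds_cont; auto. intros t Ht. unfold H. rewrite ext01_eq by lra.
      rewrite <- (finv_f f Hf x) at 1 by lra. rewrite <- (finv_f f Hf x') by lra.
      split; apply (finv_le f Hf); lra. }
    rewrite <- (RInt_Chasles_cont F 0 x x' F_cont), <- (RInt_Chasles_cont H (f x') (f x) 1 H_cont).
    rewrite Hx' in A, B |- *. unfold Rdiv in *. nra.
Qed.

Lemma RInt_finv : RInt (finv f) 0 1 = RInt f 0 1.
Proof.
  rewrite <- (RInt_ext01 f), <- (RInt_ext01 (finv f)). fold F H.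
  apply Rminus_diag_uniq_sym, Rabs_eq_0. apply Rle_antisym; [|apply Rabs_pos].
  apply Rnot_lt_le. intros Hd.
  destruct (INR_archimed _ 1 Hd) as [n Hn].
  destruct n as [|n]; [simpl in Hn; lra|].
  assert (HN : 0 < INR (S n)) by (apply lt_0_INR; lia).
  destruct (staircase (S n) (S n) ltac:(lia) (Nat.le_refl _)) as [L [H1 H2]].
  replace (INR (S n) / INR (S n)) with 1 in H1, H2 by (field; lra).
  rewrite (decr_1 f Hf), Rmult_0_r, Rminus_0_r in H2. rewrite (decr_1 f Hf) in H1.
  assert (Hle : Rabs (RInt F 0 1 - RInt H 0 1) <= 1 / INR (S n))
    by (apply Rabs_le; unfold Rdiv in *; lra).
  apply (Rmult_le_compat_l (INR (S n))) in Hle; [|lra].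
  replace (INR (S n) * (1 / INR (S n))) with 1 in Hle by (field; lra).
  lra.
Qed.

End InverseIntegral.

Section IntegralOfT.
Variable f : R -> R.
Hypothesis Hf : decr_homeo f.

Lemma RInt_pos : 0 < RInt f 0 1.
Proof.
  rewrite <- RInt_ext01.
  replace 0 with (RInt (fun _ => 0) 0 1) at 1 by (rewrite RInt_const; apply Rmult_0_r).
  apply (RInt_lt_at _ _ (continuity_pt_cst 0) (ext01_continuity_pt f (decr_cont f Hf)) 0 1 (1/2));
    [lra | intros t Ht | ]; rewrite ext01_eq by lra.
  - apply (decr_range f Hf); lra.
  - apply (decr_pos f Hf); lra.
Qed.

(* Integration by parts: [x * int_x^1 finv f] vanishes at both ends. *)
Lemma RInt_T : RInt (T f) 0 1 = RInt (fun y => y * finv f y) 0 1 / RInt f 0 1.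
Proof.
  set (h := ext01 (finv f)).
  assert (Hh : forall x, continuity_pt h x) by apply (ext01_continuity_pt _ (finv_cont f Hf)).
  assert (Hyh : forall x, continuity_pt (fun y => y * h y) x)
    by (intro; apply continuity_pt_mult; [apply continuity_pt_id | auto]).
  set (H := fun x => RInt h x 1).
  assert (HD : forall x, is_derive H x (- h x)).
  { intros x. apply (is_derive_RInt' h H x 1).
    - apply filter_forall. intros y. apply (@RInt_correct R_CompleteNormedModule), ex_RInt_cont, Hh.
    - apply continuity_pt_filterlim, Hh. }
  assert (HC : forall x, continuity_pt H x).
  { intros x. apply continuity_pt_filterlim.
    apply (@ex_derive_continuous R_AbsRing R_NormedModule). eexists; apply HD. }
  assert (Parts : RInt H 0 1 = RInt (fun y => y * h y) 0 1).
  { assert (KD : forall x, is_derive (fun t => t * H t) x (H x - x * h x)).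
    { intros x. replace (H x - x * h x) with (1 * H x + x * (- h x)) by ring.
      apply (is_derive_mult (fun t => t) H x 1 (- h x) (is_derive_id x) (HD x)).
      intros; apply Rmult_comm. }
    assert (I : is_RInt (fun x => H x - x * h x) 0 1 (1 * H 1 - 0 * H 0)).
    { apply (@is_RInt_derive R_CompleteNormedModule (fun t => t * H t)); intros x _; [apply KD|].
      apply continuity_pt_filterlim, continuity_pt_minus; auto. }
    unfold H at 2 in I. rewrite RInt_point in I.
    apply (@is_RInt_unique R_CompleteNormedModule) in I.
    rewrite (RInt_minus H) in I by (apply ex_RInt_cont; auto).
    change (RInt H 0 1 - RInt (fun x => x * h x) 0 1 = 1 * 0 - 0 * H 0) in I. lra. }
  assert (Eh : forall a, 0 <= a <= 1 -> RInt (finv f) a 1 = RInt h a 1).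
  { intros a Ha. apply RInt_ext. intros t Ht. rewrite Rmin_left, Rmax_right in Ht by lra.
    unfold h. rewrite ext01_eq by lra. reflexivity. }
  transitivity (RInt (fun x => H x / RInt f 0 1) 0 1).
  { apply RInt_ext. intros x Hx. rewrite Rmin_left, Rmax_right in Hx by lra.
    unfold T, H. rewrite Eh by lra. reflexivity. }
  unfold Rdiv. rewrite (RInt_ext (fun y => y * finv f y) (fun y => y * h y))
    by (intros x Hx; rewrite Rmin_left, Rmax_right in Hx by lra; unfold h; rewrite ext01_eq by lra;
        reflexivity).
  rewrite <- Parts.
  rewrite (RInt_ext _ (fun x => scal (/ RInt f 0 1) (H x)))
    by (intros; change (H x * / RInt f 0 1 = / RInt f 0 1 * H x); apply Rmult_comm).
  rewrite RInt_scal by (apply ex_RInt_cont; auto). apply Rmult_comm.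
Qed.

End IntegralOfT.

(** * Right derivatives and clean crossings *)

Definition right_lim (p : R -> R) (x0 l : R) : Prop :=
  forall eps, 0 < eps -> exists d, 0 < d /\ forall y, x0 < y < x0 + d -> Rabs (p y - l) < eps.

Lemma right_lim_filterlim p x0 l : right_lim p x0 l <-> filterlim p (at_right x0) (locally l).
Proof.
  split.
  - intros H. apply filterlim_locally. intros eps.
    destruct (H eps (cond_pos eps)) as [d [Hd H']].
    exists (mkposreal d Hd). intros y Hy Hy'. apply H'.
    change (Rabs (y - x0) < d) in Hy. apply Rabs_def2 in Hy. lra.
  - intros H eps He.
    destruct (proj1 (filterlim_locally p l) H (mkposreal eps He)) as [d Hd].
    exists d; split; [apply cond_pos|]. intros y Hy.
    apply Hd; [change (Rabs (y - x0) < d); apply Rabs_def1; lra | lra].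
Qed.

Lemma right_lim_plus p q x0 lp lq : right_lim p x0 lp -> right_lim q x0 lq ->
  right_lim (fun y => p y + q y) x0 (lp + lq).
Proof.
  rewrite !right_lim_filterlim. intros Hp Hq.
  eapply filterlim_comp_2; [exact Hp | exact Hq | apply (filterlim_plus lp lq)].
Qed.

Lemma right_lim_mult p q x0 lp lq : right_lim p x0 lp -> right_lim q x0 lq ->
  right_lim (fun y => p y * q y) x0 (lp * lq).
Proof.
  rewrite !right_lim_filterlim. intros Hp Hq.
  eapply filterlim_comp_2; [exact Hp | exact Hq | apply (@filterlim_mult R_AbsRing lp lq)].
Qed.

Lemma right_lim_inv p x0 l : right_lim p x0 l -> l <> 0 -> right_lim (fun y => / p y) x0 (/ l).
Proof.
  rewrite !right_lim_filterlim. intros Hp Hl.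
  eapply filterlim_comp; [exact Hp|].
  apply (filterlim_Rbar_inv (Finite l)). intros E; apply Hl; injection E; auto.
Qed.

Lemma right_lim_const c x0 : right_lim (fun _ => c) x0 c.
Proof. intros eps He. exists 1; split; [lra|]. intros. rewrite Rminus_diag, Rabs_R0; lra. Qed.

Lemma right_lim_opp p x0 l : right_lim p x0 l -> right_lim (fun y => - p y) x0 (- l).
Proof.
  intros H eps He. destruct (H eps He) as [d [Hd H']]. exists d; split; auto.
  intros y Hy. replace (- p y - - l) with (- (p y - l)) by ring. rewrite Rabs_Ropp. auto.
Qed.

Lemma right_lim_ext p q x0 l : (exists d, 0 < d /\ forall y, x0 < y < x0 + d -> p y = q y) ->
  right_lim p x0 l -> right_lim q x0 l.
Proof.
  intros [d0 [Hd0 E]] H eps He. destruct (H eps He) as [d [Hd H']].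
  exists (Rmin d d0). split; [apply Rmin_glb_lt; auto|].
  intros y Hy. pose proof (Rmin_l d d0). pose proof (Rmin_r d d0).
  rewrite <- E by lra. apply H'. lra.
Qed.

Lemma right_lim_cont p x0 : continuity_pt p x0 -> right_lim p x0 (p x0).
Proof.
  intros H eps He. destruct (proj1 (continuity_pt_eps p x0) H eps He) as [d [Hd H']].
  exists d; split; auto. intros y Hy. apply H'. apply Rabs_def1; lra.
Qed.

Lemma right_lim_shift p x0 l : right_lim p x0 l -> right_lim (fun h => p (x0 + h)) 0 l.
Proof.
  intros H eps He. destruct (H eps He) as [d [Hd H']].
  exists d; split; auto. intros y Hy. apply H'. lra.
Qed.

Lemma right_lim_scale p x0 l a : 0 < a -> right_lim p (a * x0) l ->
  right_lim (fun y => p (a * y)) x0 l.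
Proof.
  intros Ha H eps He. destruct (H eps He) as [d [Hd H']].
  exists (d / a). split; [apply Rdiv_lt_0_compat; auto|].
  intros y Hy. apply H'. split; [nra|].
  assert (a * y < a * (x0 + d / a)) by (apply Rmult_lt_compat_l; lra).
  replace (a * (x0 + d / a)) with (a * x0 + d) in H0 by (field; lra). lra.
Qed.

Lemma right_lim_le p x0 l c : right_lim p x0 l ->
  (exists d, 0 < d /\ forall y, x0 < y < x0 + d -> p y <= c) -> l <= c.
Proof.
  intros H [d0 [Hd0 Hb]]. apply Rnot_lt_le. intros Hlt.
  destruct (H (l - c) ltac:(lra)) as [d [Hd H']].
  set (y := x0 + Rmin d d0 / 2).
  assert (x0 < y < x0 + d /\ y < x0 + d0)
    by (unfold y; pose proof (Rmin_l d d0); pose proof (Rmin_r d d0);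
        pose proof (Rmin_glb_lt d d0 0 Hd Hd0); lra).
  specialize (H' y ltac:(lra)). specialize (Hb y ltac:(lra)). apply Rabs_def2 in H'. lra.
Qed.

Lemma right_lim_ge p x0 l c : right_lim p x0 l ->
  (exists d, 0 < d /\ forall y, x0 < y < x0 + d -> c <= p y) -> c <= l.
Proof.
  intros H [d [Hd Hb]]. cut (- l <= - c); [lra|].
  apply (right_lim_le (fun y => - p y) x0); [apply right_lim_opp, H|].
  exists d; split; auto. intros y Hy. specialize (Hb y Hy). lra.
Qed.

Lemma right_lim_zero_at_0 (k : R -> R) : continuity_pt k 0 ->
  (forall t, 0 < t < 1 -> k t = 0) -> k 0 = 0.
Proof.
  intros Hk Hz. pose proof (right_lim_cont k 0 Hk) as L.
  apply Rle_antisym; [apply (right_lim_le k 0) | apply (right_lim_ge k 0)]; auto;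
    exists 1; (split; [lra|]); intros y Hy; rewrite Hz by lra; lra.
Qed.

Definition right_deriv (g : R -> R) (x d : R) : Prop :=
  right_lim (fun h => (g (x + h) - g x) / h) 0 d.

Definition right_cont (g : R -> R) (x : R) : Prop := right_lim g x (g x).

Lemma right_deriv_opp g x d : right_deriv g x d -> right_deriv (fun y => - g y) x (- d).
Proof.
  intros H. eapply right_lim_ext; [|apply right_lim_opp, H].
  exists 1; split; [lra|]. intros y Hy. field. lra.
Qed.

Lemma right_deriv_ext g1 g2 x d :
  (exists d0, 0 < d0 /\ forall y, x <= y < x + d0 -> g1 y = g2 y) ->
  right_deriv g1 x d -> right_deriv g2 x d.
Proof.
  intros [d0 [Hd0 E]] H. eapply right_lim_ext; [|exact H].
  exists d0; split; auto. intros y Hy. rewrite !E by lra. reflexivity.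
Qed.

Lemma right_deriv_div u v x du dv : right_deriv u x du -> right_deriv v x dv ->
  right_cont v x -> v x <> 0 ->
  (exists d0, 0 < d0 /\ forall h, 0 < h < d0 -> v (x + h) <> 0) ->
  right_deriv (fun y => u y / v y) x ((du * v x - u x * dv) / (v x * v x)).
Proof.
  intros Hu Hv Hc Hn [d0 [Hd0 Hnz]].
  apply (right_lim_ext
    (fun h => ((u (x + h) - u x) / h * v x - u x * ((v (x + h) - v x) / h)) * / (v (x + h) * v x))).
  { exists d0; split; auto. intros h Hh. specialize (Hnz h ltac:(lra)).
    field. repeat split; auto; lra. }
  apply right_lim_mult.
  - apply right_lim_plus; [apply right_lim_mult; [exact Hu | apply right_lim_const]|].
    apply right_lim_opp, right_lim_mult; [apply right_lim_const | exact Hv].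
  - apply right_lim_inv; [| apply Rmult_integral_contrapositive; auto].
    apply right_lim_mult; [apply right_lim_shift, Hc | apply right_lim_const].
Qed.

Lemma lub_approx (E : R -> Prop) z : is_lub E z ->
  forall d, 0 < d -> exists x, E x /\ z - d < x /\ x <= z.
Proof.
  intros [Hub Hl] d Hd. apply NNPP. intros Hno.
  assert (z <= z - d); [|lra]. apply Hl. intros x Ex.
  apply Rnot_lt_le. intros Hx. apply Hno. exists x. split; [exact Ex|]. split; [exact Hx|].
  apply Hub, Ex.
Qed.

Definition dini_nonpos (g : R -> R) (x : R) : Prop :=
  forall eps, 0 < eps -> exists d, 0 < d /\ forall h, 0 < h < d -> g (x + h) <= g x + eps * h.

Lemma dini_nonpos_of_right_deriv g x d : right_deriv g x d -> d <= 0 -> dini_nonpos g x.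
Proof.
  intros H Hd eps He. destruct (H eps He) as [d0 [Hd0 H']].
  exists d0; split; auto. intros h Hh. specialize (H' h ltac:(lra)).
  apply Rabs_def2 in H'.
  assert (Hq : (g (x + h) - g x) / h * h < eps * h) by (apply Rmult_lt_compat_r; lra).
  unfold Rdiv in Hq. rewrite Rmult_assoc, Rinv_l, Rmult_1_r in Hq by lra. lra.
Qed.

(* The supremum of the points below the line of slope [eps] through [(s, g s)] cannot stop
   before [t]. *)
Lemma dini_nonpos_le (g : R -> R) s t : s < t ->
  (forall x, s <= x <= t -> continuity_pt g x) ->
  (forall x, s <= x < t -> dini_nonpos g x) -> g t <= g s.
Proof.
  intros Hst Hc Hr. apply Rnot_lt_le. intros Hlt.
  set (eps := (g t - g s) / (2 * (t - s))).
  assert (He : 0 < eps) by (unfold eps; apply Rdiv_lt_0_compat; lra).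
  set (E := fun x => s <= x <= t /\ g x <= g s + eps * (x - s)).
  assert (Hs : E s) by (split; [lra | rewrite Rminus_diag, Rmult_0_r; lra]).
  destruct (completeness E (ex_intro _ t (fun x Ex => proj2 (proj1 Ex))) (ex_intro _ s Hs))
    as [z Hz].
  assert (Hzs : s <= z) by (apply Hz; auto).
  assert (Hzt : z <= t) by (apply Hz; intros x [Hx _]; lra).
  assert (Ez : g z <= g s + eps * (z - s)).
  { apply Rnot_lt_le. intros Hgt.
    set (k := fun y => g y - eps * y).
    assert (Hk : continuity_pt k z).
    { apply continuity_pt_minus; [apply Hc; lra|].
      apply continuity_pt_mult; [apply continuity_pt_cst | apply continuity_pt_id]. }
    destruct (proj1 (continuity_pt_eps k z) Hk (g z - g s - eps * (z - s)) ltac:(lra))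
      as [d [Hd Hdd]].
    destruct (lub_approx E z Hz d Hd) as [x [[Hx1 Hx2] [Hx3 Hx4]]].
    specialize (Hdd x ltac:(apply Rabs_def1; lra)). unfold k in Hdd.
    apply Rabs_def2 in Hdd. lra. }
  destruct (Req_dec z t) as [->|Hzt'].
  - assert (eps * (t - s) = (g t - g s) / 2) by (unfold eps; field; lra). lra.
  - destruct (Hr z ltac:(lra) eps He) as [d [Hd Hdd]].
    set (h := Rmin (d / 2) ((t - z) / 2)).
    assert (Hh : 0 < h /\ h < d /\ h < t - z) by (unfold h, Rmin; destruct Rle_dec; lra).
    assert (E (z + h)) by (split; [lra | specialize (Hdd h ltac:(lra)); nra]).
    assert (z + h <= z) by (apply Hz; auto). lra.
Qed.

Lemma last_crossing (g : R -> R) p q b : p < q ->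
  (forall x, p <= x <= q -> continuity_pt g x) -> g p < b -> b < g q ->
  exists z, p < z < q /\ g z = b /\ forall y, z < y <= q -> b < g y.
Proof.
  intros Hpq Hc Hp Hq.
  set (E := fun x => p <= x <= q /\ g x <= b).
  assert (Hs : E p) by (split; lra).
  destruct (completeness E (ex_intro _ q (fun x Ex => proj2 (proj1 Ex))) (ex_intro _ p Hs))
    as [z Hz].
  assert (Hzs : p <= z) by (apply Hz; auto).
  assert (Hzt : z <= q) by (apply Hz; intros x [Hx _]; lra).
  assert (Ez : g z <= b).
  { apply Rnot_lt_le. intros Hgt.
    destruct (proj1 (continuity_pt_eps g z) (Hc z ltac:(lra)) (g z - b) ltac:(lra))
      as [d [Hd Hdd]].
    destruct (lub_approx E z Hz d Hd) as [x [[Hx1 Hx2] [Hx3 Hx4]]].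
    specialize (Hdd x ltac:(apply Rabs_def1; lra)). apply Rabs_def2 in Hdd. lra. }
  assert (Hzq : z < q) by (destruct (Req_dec z q) as [->|]; lra).
  assert (Ez' : b <= g z).
  { apply Rnot_lt_le. intros Hlt.
    destruct (proj1 (continuity_pt_eps g z) (Hc z ltac:(lra)) (b - g z) ltac:(lra))
      as [d [Hd Hdd]].
    set (h := Rmin (d / 2) ((q - z) / 2)).
    assert (Hh : 0 < h /\ h < d /\ h < q - z) by (unfold h, Rmin; destruct Rle_dec; lra).
    specialize (Hdd (z + h) ltac:(apply Rabs_def1; lra)). apply Rabs_def2 in Hdd.
    assert (z + h <= z) by (apply Hz; split; lra). lra. }
  exists z. split; [split; [destruct (Req_dec z p) as [->|]; lra | exact Hzq]|].
  split; [lra|].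
  intros y Hy. apply Rnot_le_lt. intros Hle.
  assert (y <= z) by (apply Hz; split; lra). lra.
Qed.

Lemma first_crossing (g : R -> R) p q b : p < q ->
  (forall x, p <= x <= q -> continuity_pt g x) -> g p < b -> b < g q ->
  exists z, p < z < q /\ g z = b /\ forall y, p <= y < z -> g y < b.
Proof.
  intros Hpq Hc Hp Hq.
  set (k := fun x => - g (- x)).
  assert (Hk : forall x, - q <= x <= - p -> continuity_pt k x).
  { intros x Hx. apply continuity_pt_opp.
    apply (continuity_pt_comp Ropp g);
      [apply continuity_pt_opp, continuity_pt_id | apply Hc; lra]. }
  destruct (last_crossing k (- q) (- p) (- b) ltac:(lra) Hk) as [z [Hz [Hkz Hy]]];
    unfold k in *; rewrite ?Ropp_involutive; try lra.
  exists (- z). split; [lra|]. split; [lra|].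
  intros y Hy'. specialize (Hy (- y) ltac:(lra)). rewrite Ropp_involutive in Hy. lra.
Qed.

Lemma increasing_of_right_deriv_pos g dg u w : u < w ->
  (forall x, u <= x <= w -> continuity_pt g x) ->
  (forall y, u <= y < w -> right_deriv g y (dg y) /\ 0 < dg y) -> g u < g w.
Proof.
  intros Huw Hc Hd.
  destruct (Hd u ltac:(lra)) as [Hu Hpos].
  destruct (Hu (dg u / 2) ltac:(lra)) as [d1 [Hd1 H1]].
  set (h := Rmin (d1 / 2) ((w - u) / 2)).
  assert (Hh : 0 < h /\ h < d1 /\ h < w - u) by (unfold h, Rmin; destruct Rle_dec; lra).
  specialize (H1 h ltac:(lra)). apply Rabs_def2 in H1.
  assert (Start : g u < g (u + h)).
  { assert (Hq : 0 * h < (g (u + h) - g u) / h * h) by (apply Rmult_lt_compat_r; lra).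
    unfold Rdiv in Hq. rewrite Rmult_assoc, Rinv_l, Rmult_1_r in Hq by lra. lra. }
  assert (Rest : - g w <= - g (u + h)).
  { apply (dini_nonpos_le (fun y => - g y)); [lra | intros; apply continuity_pt_opp, Hc; lra|].
    intros y Hy. destruct (Hd y ltac:(lra)) as [Hy1 Hy2].
    apply (dini_nonpos_of_right_deriv _ _ (- dg y)); [apply right_deriv_opp; auto | lra]. }
  lra.
Qed.

(* Between a last crossing of [b1] and the next crossing of [b2] the right derivative must
   become positive somewhere, and by right continuity it stays positive nearby. *)
Lemma increasing_piece (g dg : R -> R) p q b1 b2 : p < q ->
  (forall x, p <= x <= q -> continuity_pt g x) ->
  (forall x, p < x < q -> right_deriv g x (dg x) /\ right_cont dg x) ->
  g p < b1 -> b1 < b2 -> b2 < g q ->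
  exists y1 y2, p < y1 < y2 /\ y2 < q /\ b1 < g y1 /\ g y2 < b2 /\
    forall u w, y1 <= u < w -> w <= y2 -> g u < g w.
Proof.
  intros Hpq Hc Hd Hp H12 Hq.
  destruct (last_crossing g p q b1 Hpq Hc Hp ltac:(lra)) as [s [Hs [Hgs Hs']]].
  destruct (first_crossing g s q b2 ltac:(lra) ltac:(intros; apply Hc; lra) ltac:(lra) Hq)
    as [t [Ht [Hgt Ht']]].
  assert (Hband : forall y, s < y < t -> b1 < g y < b2)
    by (intros y Hy; split; [apply Hs'; lra | apply Ht'; lra]).
  set (m := (s + t) / 2).
  assert (Hm : s < m < t) by (unfold m; lra).
  assert (Hex : exists x, m <= x < t /\ 0 < dg x).
  { apply NNPP. intros Hno.
    assert (g t <= g m); [|pose proof (Hband m Hm); lra].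
    apply dini_nonpos_le; [lra | intros; apply Hc; lra|].
    intros x Hx. destruct (Hd x ltac:(lra)) as [Hdx _].
    apply (dini_nonpos_of_right_deriv _ _ (dg x)); auto.
    apply Rnot_lt_le. intros Hpos. apply Hno. exists x. split; auto. }
  destruct Hex as [x [Hx Hdx]].
  destruct (proj2 (Hd x ltac:(lra)) (dg x / 2) ltac:(lra)) as [d0 [Hd0 Hdd]].
  set (d := Rmin d0 (t - x)).
  assert (Hd' : 0 < d /\ d <= d0 /\ d <= t - x) by (unfold d, Rmin; destruct Rle_dec; lra).
  exists (x + d / 3), (x + 2 * d / 3).
  split; [lra|]. split; [lra|].
  split; [apply Hband; lra|]. split; [apply Hband; lra|].
  intros u w Hu Hw. apply (increasing_of_right_deriv_pos g dg); [lra | intros; apply Hc; lra|].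
  intros y Hy. split; [apply Hd; lra|].
  specialize (Hdd y ltac:(lra)). apply Rabs_def2 in Hdd. lra.
Qed.

Definition clean_crossing (g : R -> R) (b p q x : R) : Prop :=
  p < x < q /\ g x = b /\ exists d, 0 < d /\ d <= x - p /\ d <= q - x /\
    forall s, 0 < s <= d -> (g (x - s) - b) * (g (x + s) - b) < 0.

Lemma clean_crossing_opp g b p q x :
  clean_crossing (fun y => - g y) (- b) p q x -> clean_crossing g b p q x.
Proof.
  intros (Hx & Hgx & d & Hd & Hdp & Hdq & Hs). split; [exact Hx|]. split; [lra|].
  exists d. repeat split; auto. intros s Hsd. specialize (Hs s Hsd). nra.
Qed.

Lemma clean_crossing_levels_up (g dg : R -> R) p q b1 b2 : p < q ->
  (forall x, p <= x <= q -> continuity_pt g x) ->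
  (forall x, p < x < q -> right_deriv g x (dg x) /\ right_cont dg x) ->
  g p < b1 -> b1 < b2 -> b2 < g q ->
  exists c1 c2, b1 <= c1 < c2 /\ c2 <= b2 /\
    forall b, c1 < b < c2 -> exists x, clean_crossing g b p q x.
Proof.
  intros Hpq Hc Hd Hp H12 Hq.
  destruct (increasing_piece g dg p q b1 b2 Hpq Hc Hd Hp H12 Hq)
    as [y1 [y2 [Hy [Hy2 [G1 [G2 Hincr]]]]]].
  exists (g y1), (g y2). split; [split; [lra | apply Hincr; lra]|]. split; [lra|].
  intros b Hb.
  destruct (last_crossing g y1 y2 b ltac:(lra) ltac:(intros; apply Hc; lra) ltac:(lra) ltac:(lra))
    as [x [Hx [Hgx _]]].
  exists x. split; [lra|]. split; [exact Hgx|].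
  exists (Rmin (x - y1) (y2 - x)).
  pose proof (Rmin_l (x - y1) (y2 - x)). pose proof (Rmin_r (x - y1) (y2 - x)).
  split; [apply Rmin_glb_lt; lra|]. split; [lra|]. split; [lra|].
  intros s Hs.
  assert (g (x - s) < g x) by (apply Hincr; lra).
  assert (g x < g (x + s)) by (apply Hincr; lra).
  apply Rmult_neg_pos; lra.
Qed.

Lemma clean_crossing_levels (g dg : R -> R) p q b1 b2 : p < q ->
  (forall x, p <= x <= q -> continuity_pt g x) ->
  (forall x, p < x < q -> right_deriv g x (dg x) /\ right_cont dg x) -> b1 < b2 ->
  (g p < b1 /\ b2 < g q) \/ (b2 < g p /\ g q < b1) ->
  exists c1 c2, b1 <= c1 < c2 /\ c2 <= b2 /\
    forall b, c1 < b < c2 -> exists x, clean_crossing g b p q x.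
Proof.
  intros Hpq Hc Hd H12 [[Hp Hq]|[Hp Hq]].
  - apply (clean_crossing_levels_up g dg); auto.
  - destruct (clean_crossing_levels_up (fun y => - g y) (fun y => - dg y) p q (- b2) (- b1))
      as [c1 [c2 [Hc1 [Hc2 K]]]]; try lra.
    + intros x Hx. apply continuity_pt_opp, Hc, Hx.
    + intros x Hx. destruct (Hd x Hx) as [Hdx Hrc].
      split; [apply right_deriv_opp, Hdx | apply right_lim_opp, Hrc].
    + exists (- c2), (- c1). split; [lra|]. split; [lra|].
      intros b Hb. destruct (K (- b) ltac:(lra)) as [x Hx].
      exists x. apply clean_crossing_opp, Hx.
Qed.

Lemma sign_change_margin u v b e : (u - b) * (v - b) < 0 ->
  e < Rabs (u - b) -> e < Rabs (v - b) ->
  (u < b - e /\ b + e < v) \/ (b + e < u /\ v < b - e).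
Proof.
  intros H Hu Hv. unfold Rabs in *.
  destruct (Rcase_abs (u - b)); destruct (Rcase_abs (v - b)); [nra | left; lra | right; lra | nra].
Qed.

(* Nest the level intervals of the three crossings: every level in the innermost one works. *)
Lemma common_clean_level (g dg : R -> R) lo hi b p1 q1 p2 q2 p3 q3 :
  (forall x, lo <= x <= hi -> continuity_pt g x) ->
  (forall x, lo < x < hi -> right_deriv g x (dg x) /\ right_cont dg x) -> 0 < b ->
  lo <= p1 -> p1 < q1 -> q1 <= p2 -> p2 < q2 -> q2 <= p3 -> p3 < q3 -> q3 <= hi ->
  (g p1 - b) * (g q1 - b) < 0 -> (g p2 - b) * (g q2 - b) < 0 -> (g p3 - b) * (g q3 - b) < 0 ->
  exists b', 0 < b' /\ exists x1 x2 x3,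
    clean_crossing g b' p1 q1 x1 /\ clean_crossing g b' p2 q2 x2 /\ clean_crossing g b' p3 q3 x3.
Proof.
  intros Hc Hd Hb H0 H1 H2 H3 H4 H5 H6 C1 C2 C3.
  assert (Nz : forall u v, (u - b) * (v - b) < 0 -> 0 < Rabs (u - b) /\ 0 < Rabs (v - b)).
  { intros u v Huv. split; apply Rabs_pos_lt; intro E; rewrite E in Huv; lra. }
  destruct (Nz _ _ C1) as [A1 B1]. destruct (Nz _ _ C2) as [A2 B2].
  destruct (Nz _ _ C3) as [A3 B3].
  set (e := Rmin b (Rmin (Rmin (Rabs (g p1 - b)) (Rabs (g q1 - b)))
             (Rmin (Rmin (Rabs (g p2 - b)) (Rabs (g q2 - b)))
                   (Rmin (Rabs (g p3 - b)) (Rabs (g q3 - b))))) / 2).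
  assert (He : 0 < e /\ e < b /\ e < Rabs (g p1 - b) /\ e < Rabs (g q1 - b) /\
     e < Rabs (g p2 - b) /\ e < Rabs (g q2 - b) /\ e < Rabs (g p3 - b) /\ e < Rabs (g q3 - b))
    by (unfold e, Rmin; repeat destruct Rle_dec; lra).
  destruct He as (He0 & He1 & E1 & E2 & E3 & E4 & E5 & E6).
  destruct (clean_crossing_levels g dg p1 q1 (b - e) (b + e) H1
      ltac:(intros; apply Hc; lra) ltac:(intros; apply Hd; lra) ltac:(lra)
      (sign_change_margin _ _ b e C1 E1 E2)) as [c1 [c2 [Hc1 [Hc2 K1]]]].
  destruct (clean_crossing_levels g dg p2 q2 c1 c2 H3
      ltac:(intros; apply Hc; lra) ltac:(intros; apply Hd; lra) ltac:(lra))
    as [c3 [c4 [Hc3 [Hc4 K2]]]].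
  { destruct (sign_change_margin _ _ b e C2 E3 E4); [left|right]; lra. }
  destruct (clean_crossing_levels g dg p3 q3 c3 c4 H5
      ltac:(intros; apply Hc; lra) ltac:(intros; apply Hd; lra) ltac:(lra))
    as [c5 [c6 [Hc5 [Hc6 K3]]]].
  { destruct (sign_change_margin _ _ b e C3 E5 E6); [left|right]; lra. }
  exists ((c5 + c6) / 2). split; [lra|].
  destruct (K1 ((c5 + c6) / 2) ltac:(lra)) as [x1 X1].
  destruct (K2 ((c5 + c6) / 2) ltac:(lra)) as [x2 X2].
  destruct (K3 ((c5 + c6) / 2) ltac:(lra)) as [x3 X3].
  exists x1, x2, x3. auto.
Qed.

(** * Convex functions and the ratio [f (a x) / f x] *)

Section ConvexRightDerivative.
Variable f : R -> R.
Hypothesis Hf : inD f.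
Let Hdh : decr_homeo f := inD_decr_homeo f Hf.

Definition slope (u v : R) := (f v - f u) / (v - u).

Lemma slope_mono u v w : 0 <= u -> u < v -> v < w -> w <= 1 ->
  slope u v <= slope u w /\ slope u w <= slope v w.
Proof.
  intros Hu Huv Hvw Hw. pose proof (proj1 (proj2 (proj2 Hf))) as Hconv.
  set (t := (w - v) / (w - u)).
  assert (Ht : 0 <= t <= 1).
  { unfold t. split; [apply Rdiv_le_0_compat; lra|].
    apply (Rmult_le_reg_r (w - u)); [lra|].
    unfold Rdiv. rewrite Rmult_assoc, Rinv_l by lra. lra. }
  pose proof (Hconv u w t ltac:(lra) ltac:(lra) Ht) as C.
  replace (t * u + (1 - t) * w) with v in C by (unfold t; field; lra).
  assert (C' : f v * (w - u) <= (w - v) * f u + (v - u) * f w).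
  { apply (Rmult_le_compat_r (w - u)) in C; [|lra].
    replace ((t * f u + (1 - t) * f w) * (w - u)) with ((w - v) * f u + (v - u) * f w)
      in C by (unfold t; field; lra).
    exact C. }
  unfold slope. split.
  - apply (Rmult_le_reg_r ((v - u) * (w - u))); [nra|].
    replace ((f v - f u) / (v - u) * ((v - u) * (w - u))) with ((f v - f u) * (w - u))
      by (field; lra).
    replace ((f w - f u) / (w - u) * ((v - u) * (w - u))) with ((f w - f u) * (v - u))
      by (field; lra).
    nra.
  - apply (Rmult_le_reg_r ((w - u) * (w - v))); [nra|].
    replace ((f w - f u) / (w - u) * ((w - u) * (w - v))) with ((f w - f u) * (w - v))
      by (field; lra).
    replace ((f w - f v) / (w - v) * ((w - u) * (w - v))) with ((f w - f v) * (w - u))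
      by (field; lra).
    nra.
Qed.

Lemma slope_shift x h : h <> 0 -> (f (x + h) - f x) / h = slope x (x + h).
Proof. intros. unfold slope. replace (x + h - x) with h by ring. reflexivity. Qed.

(* The right difference quotients decrease as [h] decreases to [0] and are bounded below by
   [slope 0 x]; their infimum is the right derivative. *)
Lemma convex_right_deriv_exists x : 0 < x < 1 -> exists d, right_deriv f x d.
Proof.
  intros Hx.
  set (E := fun s => exists h, 0 < h <= 1 - x /\ s = - slope x (x + h)).
  assert (Hb : bound E).
  { exists (- slope 0 x). intros s [h [Hh ->]].
    pose proof (slope_mono 0 x (x + h)). lra. }
  assert (Hne : E (- slope x (x + (1 - x)))) by (exists (1 - x); split; [lra | auto]).
  destruct (completeness E Hb (ex_intro _ _ Hne)) as [L HL].
  exists (- L). intros eps He.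
  destruct (lub_approx E L HL eps He) as [s [[h1 [Hh1 ->]] [Hs1 Hs2]]].
  exists h1. split; [lra|]. intros h Hh. rewrite slope_shift by lra.
  assert (Ub : - slope x (x + h) <= L) by (apply HL; exists h; split; [lra | auto]).
  assert (slope x (x + h) <= slope x (x + h1)).
  { destruct (Req_dec h h1) as [->|]; [lra|].
    pose proof (slope_mono x (x + h) (x + h1)). lra. }
  apply Rabs_def1; lra.
Qed.

Definition rderiv (x : R) : R := epsilon (inhabits 0) (fun d => right_deriv f x d).

Lemma rderiv_spec x : 0 < x < 1 -> right_deriv f x (rderiv x).
Proof. intros Hx. unfold rderiv. apply epsilon_spec, convex_right_deriv_exists, Hx. Qed.

Lemma rderiv_le_slope x v : 0 < x < 1 -> x < v <= 1 -> rderiv x <= slope x v.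
Proof.
  intros Hx Hv. apply (right_lim_le _ 0 _ _ (rderiv_spec x Hx)).
  exists (v - x). split; [lra|]. intros h Hh. rewrite slope_shift by lra.
  destruct (Req_dec (x + h) v) as [->|]; [lra|].
  pose proof (slope_mono x (x + h) v). lra.
Qed.

Lemma slope_le_rderiv u x : 0 <= u < x -> x < 1 -> slope u x <= rderiv x.
Proof.
  intros Hu Hx. apply (right_lim_ge _ 0 _ _ (rderiv_spec x ltac:(lra))).
  exists (1 - x). split; [lra|]. intros h Hh. rewrite slope_shift by lra.
  pose proof (slope_mono u x (x + h)). lra.
Qed.

(* Squeeze [rderiv y], for [y] just right of [x], between [rderiv x] and a chord slope that
   is continuous in [y] and close to [rderiv x]. *)
Lemma rderiv_right_cont x : 0 < x < 1 -> right_cont rderiv x.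
Proof.
  intros Hx eps He.
  destruct (rderiv_spec x Hx (eps / 2) ltac:(lra)) as [d1 [Hd1 H1]].
  set (h0 := Rmin (d1 / 2) ((1 - x) / 2)).
  assert (Hh0 : 0 < h0 /\ h0 < d1 /\ h0 < 1 - x) by (unfold h0, Rmin; destruct Rle_dec; lra).
  specialize (H1 h0 ltac:(lra)). rewrite slope_shift in H1 by lra. apply Rabs_def2 in H1.
  set (chord := fun y => (f (x + h0) - f y) / (x + h0 - y)).
  assert (Hchord : continuity_pt chord x).
  { apply continuity_pt_div; [| | lra].
    - apply continuity_pt_minus; [apply continuity_pt_cst | apply (decr_continuity_pt f Hdh); lra].
    - apply continuity_pt_minus; [apply continuity_pt_cst | apply continuity_pt_id]. }
  destruct (proj1 (continuity_pt_eps chord x) Hchord (eps / 2) ltac:(lra)) as [d2 [Hd2 H2]].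
  exists (Rmin d2 h0). split; [apply Rmin_glb_lt; lra|].
  intros y Hy. pose proof (Rmin_l d2 h0). pose proof (Rmin_r d2 h0).
  assert (A : rderiv x <= rderiv y)
    by (apply Rle_trans with (slope x y); [apply rderiv_le_slope | apply slope_le_rderiv]; lra).
  assert (B : rderiv y <= chord y) by (apply (rderiv_le_slope y (x + h0)); lra).
  specialize (H2 y ltac:(apply Rabs_def1; lra)). apply Rabs_def2 in H2.
  assert (chord x = slope x (x + h0)) by (unfold chord, slope; field; lra).
  apply Rabs_def1; lra.
Qed.

End ConvexRightDerivative.

Section Ratio.
Variable f : R -> R.
Hypothesis Hf : inD f.
Let Hdh : decr_homeo f := inD_decr_homeo f Hf.
Variable a : R.
Hypothesis Ha : 0 < a.

Definition ratio (y : R) := ext01 f (a * y) / ext01 f y.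

Definition ratio_deriv (y : R) :=
  (a * rderiv f (a * y) * f y - f (a * y) * rderiv f y) / (f y * f y).

Lemma ext01_pos y : y < 1 -> 0 < ext01 f y.
Proof.
  intros Hy. apply (decr_pos f Hdh). pose proof (clamp01_in y).
  unfold clamp01, Rmax, Rmin in *; repeat destruct Rle_dec; lra.
Qed.

Lemma ratio_cont y : y < 1 -> continuity_pt ratio y.
Proof.
  intros Hy. pose proof (ext01_continuity_pt f (decr_cont f Hdh)) as Hc.
  apply continuity_pt_div; [| apply Hc | pose proof (ext01_pos y Hy); lra].
  apply (continuity_pt_comp (fun t => a * t)); [|apply Hc].
  apply continuity_pt_mult; [apply continuity_pt_cst | apply continuity_pt_id].
Qed.

Lemma ratio_0 : ratio 0 = 1.
Proof. unfold ratio. rewrite Rmult_0_r, ext01_eq, (decr_0 f Hdh) by lra. field. Qed.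

Lemma ratio_eq y : 0 <= y < 1 -> a * y <= 1 -> ratio y = f (a * y) / f y.
Proof. intros. unfold ratio. rewrite !ext01_eq; [reflexivity | lra | nra]. Qed.

Lemma ratio_right_deriv x : 0 < x < 1 -> a * x < 1 -> right_deriv ratio x (ratio_deriv x).
Proof.
  intros Hx Hax. assert (Hax0 : 0 < a * x < 1) by nra.
  assert (Du : right_deriv (fun y => f (a * y)) x (a * rderiv f (a * x))).
  { assert (K : right_lim (fun h => (f (a * x + a * h) - f (a * x)) / (a * h)) 0
                  (rderiv f (a * x))).
    { apply (right_lim_scale (fun h => (f (a * x + h) - f (a * x)) / h) 0 _ a Ha).
      rewrite Rmult_0_r. apply (rderiv_spec f Hf), Hax0. }
    apply (right_lim_ext (fun h => a * ((f (a * x + a * h) - f (a * x)) / (a * h)))).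
    - exists 1; split; [lra|]. intros y Hy. rewrite Rmult_plus_distr_l. field. lra.
    - apply right_lim_mult; [apply right_lim_const | exact K]. }
  assert (Hfx : f x <> 0) by (apply Rgt_not_eq, (decr_pos f Hdh); lra).
  assert (Hnz : exists d0, 0 < d0 /\ forall h, 0 < h < d0 -> f (x + h) <> 0).
  { exists (1 - x). split; [lra|]. intros h Hh. apply Rgt_not_eq, (decr_pos f Hdh). lra. }
  pose proof (right_deriv_div (fun y => f (a * y)) f x _ _ Du (rderiv_spec f Hf x Hx)
    (right_lim_cont f x (decr_continuity_pt f Hdh x Hx)) Hfx Hnz) as K.
  eapply right_deriv_ext; [|exact K].
  exists (Rmin (1 - x) ((1 - a * x) / a)). split.
  { apply Rmin_glb_lt; [lra | apply Rdiv_lt_0_compat; lra]. }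
  intros y Hy. pose proof (Rmin_l (1 - x) ((1 - a * x) / a)).
  pose proof (Rmin_r (1 - x) ((1 - a * x) / a)).
  assert (Hay : a * (y - x) <= a * ((1 - a * x) / a)) by (apply Rmult_le_compat_l; lra).
  replace (a * ((1 - a * x) / a)) with (1 - a * x) in Hay by (field; lra).
  symmetry. apply ratio_eq; lra.
Qed.

Lemma ratio_deriv_right_cont x : 0 < x < 1 -> a * x < 1 -> right_cont ratio_deriv x.
Proof.
  intros Hx Hax. assert (Hax0 : 0 < a * x < 1) by nra.
  assert (Hfx : 0 < f x) by (apply (decr_pos f Hdh); lra).
  assert (L1 : right_lim (fun y => rderiv f (a * y)) x (rderiv f (a * x)))
    by (apply right_lim_scale, (rderiv_right_cont f Hf); auto).
  assert (L2 : right_lim f x (f x))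
    by (apply right_lim_cont, (decr_continuity_pt f Hdh), Hx).
  assert (L3 : right_lim (fun y => f (a * y)) x (f (a * x)))
    by (apply right_lim_scale, right_lim_cont, (decr_continuity_pt f Hdh); auto).
  assert (L4 : right_lim (rderiv f) x (rderiv f x)) by (apply (rderiv_right_cont f Hf), Hx).
  unfold right_cont, ratio_deriv, Rdiv.
  apply right_lim_mult.
  - apply right_lim_plus.
    + apply right_lim_mult; [apply right_lim_mult; [apply right_lim_const | exact L1] | exact L2].
    + apply right_lim_opp, right_lim_mult; auto.
  - apply right_lim_inv; [apply right_lim_mult; auto | nra].
Qed.

End Ratio.

(** * Sign switches and the self-crossing number *)

Lemma sign_switch_ext (D1 D2 : R -> R) c0 d0 c d :
  (forall x, c0 <= x <= d0 -> D1 x = D2 x) ->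
  sign_switch D1 c0 d0 c d -> sign_switch D2 c0 d0 c d.
Proof.
  intros E (H1 & H2 & H3 & e & He & Hem & H4).
  pose proof (Rmin_l (c - c0) (d0 - d)). pose proof (Rmin_r (c - c0) (d0 - d)).
  split; [auto|]. split; [auto|]. split.
  - intros y Hy. rewrite <- E by lra. auto.
  - exists e. split; [auto|]. split; [auto|]. intros x Hx. rewrite <- !E by lra. auto.
Qed.

Lemma has_switches_ext (D1 D2 : R -> R) c0 d0 n :
  (forall x, c0 <= x <= d0 -> D1 x = D2 x) ->
  has_switches D1 c0 d0 n -> has_switches D2 c0 d0 n.
Proof.
  intros E [l [Hnd [Hl Hall]]]. exists l. split; [auto|]. split; [auto|].
  eapply Forall_impl; [|exact Hall]. intros [c d]. apply sign_switch_ext, E.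
Qed.

Lemma sign_switch_disjoint (D : R -> R) c0 d0 c1 d1 c2 d2 :
  sign_switch D c0 d0 c1 d1 -> sign_switch D c0 d0 c2 d2 ->
  (c1, d1) <> (c2, d2) -> d1 < c2 \/ d2 < c1.
Proof.
  intros (A1 & A2 & A3 & e1 & He1 & Hm1 & A4) (B1 & B2 & B3 & e2 & He2 & Hm2 & B4) Hne.
  destruct (Rlt_dec d1 c2) as [|N1]; [left; auto|].
  destruct (Rlt_dec d2 c1) as [|N2]; [right; auto|].
  exfalso.
  (* Just left of a switch starting inside another one, [D] vanishes: no sign change. *)
  assert (Hin : forall c d c' d' e, c < c' -> c' <= d -> 0 < e ->
    (forall y, c <= y <= d -> D y = 0) ->
    (forall x, 0 < x <= e -> D (c' - x) * D (d' + x) < 0) -> False).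
  { intros c d c' d' e Hc Hc' He Hz Hs.
    set (x := Rmin e (c' - c)).
    assert (0 < x /\ x <= e /\ x <= c' - c) by (unfold x, Rmin; destruct Rle_dec; lra).
    specialize (Hs x ltac:(lra)). rewrite (Hz (c' - x)) in Hs by lra. lra. }
  destruct (Rtotal_order c1 c2) as [Hc|[Hc|Hc]];
    [apply (Hin c1 d1 c2 d2 e2); auto; lra | subst c2 | apply (Hin c2 d2 c1 d1 e1); auto; lra].
  destruct (Rtotal_order d1 d2) as [Hd|[Hd|Hd]]; [| subst; apply Hne; auto |].
  - set (x := Rmin e1 (d2 - d1)).
    assert (0 < x /\ x <= e1 /\ x <= d2 - d1) by (unfold x, Rmin; destruct Rle_dec; lra).
    specialize (A4 x ltac:(lra)). rewrite (B3 (d1 + x)) in A4 by lra. lra.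
  - set (x := Rmin e2 (d1 - d2)).
    assert (0 < x /\ x <= e2 /\ x <= d1 - d2) by (unfold x, Rmin; destruct Rle_dec; lra).
    specialize (B4 x ltac:(lra)). rewrite (A3 (d2 + x)) in B4 by lra. lra.
Qed.

Lemma two_switches (D : R -> R) c0 d0 n : (2 <= n)%nat -> has_switches D c0 d0 n ->
  exists c1 d1 c2 d2, sign_switch D c0 d0 c1 d1 /\ sign_switch D c0 d0 c2 d2 /\ d1 < c2.
Proof.
  intros Hn [[|[c1 d1] [|[c2 d2] rest]] [Hnd [Hl Hall]]]; simpl in Hl; try lia.
  inversion Hnd as [|? ? Hnin _]; subst.
  inversion Hall as [|? ? S1 Hall']; inversion Hall' as [|? ? S2 _]; simpl in S1, S2.
  destruct (sign_switch_disjoint D c0 d0 c1 d1 c2 d2 S1 S2) as [O|O].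
  - intros E. apply Hnin. left. auto.
  - exists c1, d1, c2, d2. auto.
  - exists c2, d2, c1, d1. auto.
Qed.

Lemma no_sign_switch_of_constant_sign (D : R -> R) c0 d0 c d :
  (forall x, c0 <= x <= d0 -> 0 <= D x) \/ (forall x, c0 <= x <= d0 -> D x <= 0) ->
  ~ sign_switch D c0 d0 c d.
Proof.
  intros Hs (H1 & H2 & H3 & e & He & Hm & H4).
  pose proof (Rmin_l (c - c0) (d0 - d)). pose proof (Rmin_r (c - c0) (d0 - d)).
  specialize (H4 e ltac:(lra)).
  destruct Hs as [Hs|Hs];
    pose proof (Hs (c - e) ltac:(lra)); pose proof (Hs (d + e) ltac:(lra)); nra.
Qed.

Lemma sign_change_parity w0 w1 w2 w3 w4 w5 : w0 * w5 < 0 -> w1 * w2 < 0 -> w3 * w4 < 0 ->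
  w0 * w1 < 0 \/ w2 * w3 < 0 \/ w4 * w5 < 0.
Proof.
  intros A B C.
  destruct (Rlt_dec w0 0); destruct (Rlt_dec w1 0); destruct (Rlt_dec w2 0);
  destruct (Rlt_dec w3 0); destruct (Rlt_dec w4 0); destruct (Rlt_dec w5 0);
  try (left; nra); try (right; left; nra); try (right; right; nra); exfalso; nra.
Qed.

Definition self_diff (f : R -> R) (a b x : R) : R := fscale f a x - b * f x.

Section SelfCrossing.
Variable f : R -> R.
Hypothesis Hf : inD f.
Let Hdh : decr_homeo f := inD_decr_homeo f Hf.
Variable a : R.
Hypothesis Ha : 0 < a.
Let m := Rmin 1 (/ a).

Lemma m_bounds : 0 < m <= 1 /\ a * m <= 1.
Proof.
  unfold m, Rmin. pose proof (Rinv_0_lt_compat a Ha). destruct Rle_dec as [Hle|Hgt].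
  - split; [lra|]. apply (Rmult_le_compat_l a) in Hle; [|lra]. rewrite Rinv_r in Hle; lra.
  - split; [lra|]. rewrite Rinv_r; lra.
Qed.

Lemma scaled_in x : 0 <= x <= m -> 0 <= a * x <= 1.
Proof.
  intros Hx. destruct m_bounds as [_ Ham]. split; [nra|].
  assert (a * x <= a * m) by (apply Rmult_le_compat_l; lra). lra.
Qed.

Lemma self_diff_ratio b x : 0 <= x <= m -> x < 1 -> self_diff f a b x = f x * (ratio f a x - b).
Proof.
  intros Hx Hx1. unfold self_diff, fscale.
  rewrite ratio_eq by (auto; try lra; apply scaled_in; auto).
  pose proof (decr_pos f Hdh x ltac:(lra)). field. lra.
Qed.

Lemma switch_levels b c d : sign_switch (self_diff f a b) 0 m c d ->
  (a < 1 /\ 1 < b) \/ (1 < a /\ b < 1).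
Proof.
  intros S. destruct m_bounds as [Hm Ham].
  destruct (Rtotal_order a 1) as [Ha1|[Ha1|Ha1]].
  - left. split; [exact Ha1|]. apply Rnot_le_lt. intros Hb.
    revert S. apply no_sign_switch_of_constant_sign. left. intros x Hx.
    unfold self_diff, fscale. pose proof (scaled_in x Hx).
    pose proof (decr_range f Hdh x ltac:(lra)).
    assert (f x <= f (a * x)) by (apply (decr_le f Hdh); nra). nra.
  - exfalso. revert S. apply no_sign_switch_of_constant_sign.
    unfold self_diff, fscale. subst a. setoid_rewrite Rmult_1_l.
    destruct (Rle_dec b 1); [left | right]; intros x Hx;
      pose proof (decr_range f Hdh x ltac:(lra)); nra.
  - right. split; [exact Ha1|]. apply Rnot_le_lt. intros Hb.
    revert S. apply no_sign_switch_of_constant_sign. right. intros x Hx.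
    unfold self_diff, fscale. pose proof (scaled_in x Hx).
    pose proof (decr_range f Hdh x ltac:(lra)).
    assert (f (a * x) <= f x) by (apply (decr_le f Hdh); nra). nra.
Qed.

Lemma switch_ratio_sign_change b c d : sign_switch (self_diff f a b) 0 m c d ->
  exists e, 0 < e /\ forall t, 0 < t < e ->
    0 < c - t /\ d + t < m /\ (ratio f a (c - t) - b) * (ratio f a (d + t) - b) < 0.
Proof.
  intros (H1 & H2 & _ & e & He & Hem & Hs). destruct m_bounds as [Hm _].
  pose proof (Rmin_l (c - 0) (m - d)). pose proof (Rmin_r (c - 0) (m - d)).
  exists e. split; [exact He|]. intros t Ht. split; [lra|]. split; [lra|].
  specialize (Hs t ltac:(lra)). rewrite !self_diff_ratio in Hs by lra.
  pose proof (decr_pos f Hdh (c - t) ltac:(lra)). pose proof (decr_pos f Hdh (d + t) ltac:(lra)).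
  apply (Rmult_lt_reg_l (f (c - t) * f (d + t))); [nra|]. rewrite Rmult_0_r.
  replace (f (c - t) * f (d + t) * ((ratio f a (c - t) - b) * (ratio f a (d + t) - b)))
    with (f (c - t) * (ratio f a (c - t) - b) * (f (d + t) * (ratio f a (d + t) - b))) by ring.
  exact Hs.
Qed.

(* Near the right end of [[0, m]] the ratio is on the other side of [b] than at [0]: it blows
   up when [m = 1] ([f 1 = 0]) and vanishes at [m = 1/a] when [a > 1]. *)
Lemma ratio_far_side b v : 0 < b -> (a < 1 /\ 1 < b) \/ (1 < a /\ b < 1) -> 0 <= v < m ->
  exists e, v < e <= m /\ e < 1 /\ (1 - b) * (ratio f a e - b) < 0.
Proof.
  intros Hb Hcase Hv. destruct m_bounds as [Hm Ham].
  destruct Hcase as [[Ha1 Hb1]|[Ha1 Hb1]].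
  - assert (Em : m = 1).
    { unfold m, Rmin. destruct Rle_dec as [|Hn]; [reflexivity|]. exfalso. apply Hn.
      apply (Rmult_le_reg_l a); [lra|]. rewrite Rinv_r; lra. }
    pose proof (decr_pos f Hdh a ltac:(lra)) as Hfa.
    destruct (decr_cont f Hdh 1 ltac:(lra) (f a / b) ltac:(apply Rdiv_lt_0_compat; lra))
      as [d [Hd Hdd]].
    set (e := (Rmax v (1 - d / 2) + 1) / 2).
    assert (He : v < e /\ e < 1 /\ 1 - d < e) by (unfold e, Rmax; destruct Rle_dec; lra).
    exists e. split; [lra|]. split; [lra|].
    rewrite ratio_eq by nra.
    specialize (Hdd e ltac:(lra) ltac:(apply Rabs_def1; lra)). rewrite (decr_1 f Hdh) in Hdd.
    apply Rabs_def2 in Hdd.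
    assert (f a <= f (a * e)) by (apply (decr_le f Hdh); nra).
    pose proof (decr_pos f Hdh e ltac:(lra)).
    assert (Hbf : b * f e < f a).
    { assert (Hfe : f e < f a / b) by lra.
      apply (Rmult_lt_compat_l b) in Hfe; [|lra].
      replace (b * (f a / b)) with (f a) in Hfe by (field; lra). exact Hfe. }
    assert (b < f (a * e) / f e).
    { apply (Rmult_lt_reg_r (f e)); [lra|].
      unfold Rdiv. rewrite Rmult_assoc, Rinv_l, Rmult_1_r by lra. lra. }
    apply Rmult_neg_pos; lra.
  - assert (Em : a * m = 1).
    { unfold m, Rmin. destruct Rle_dec as [Hle|]; [|apply Rinv_r; lra]. exfalso.
      apply (Rmult_le_compat_l a) in Hle; [|lra]. rewrite Rinv_r in Hle; lra. }
    assert (Hm1 : m < 1) by nra.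
    exists m. split; [lra|]. split; [lra|].
    rewrite ratio_eq, Em, (decr_1 f Hdh) by lra. unfold Rdiv. rewrite Rmult_0_l. nra.
Qed.

Lemma switch_of_clean_crossing b p q x e : 0 <= p -> q <= e -> e <= m -> e < 1 ->
  clean_crossing (ratio f a) b p q x -> sign_switch (self_diff f a b) 0 m x x.
Proof.
  intros Hp Hq Hem He1 (Hx & Hrx & d & Hd & Hd1 & Hd2 & Hs).
  split; [lra|]. split; [lra|]. split.
  - intros y Hy. replace y with x by lra. rewrite self_diff_ratio, Hrx by lra. ring.
  - exists d. split; [auto|]. split; [apply Rmin_glb; lra|].
    intros s Hs'. rewrite !self_diff_ratio by lra. specialize (Hs s Hs').
    pose proof (decr_pos f Hdh (x - s) ltac:(lra)). pose proof (decr_pos f Hdh (x + s) ltac:(lra)).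
    replace (f (x - s) * (ratio f a (x - s) - b) * (f (x + s) * (ratio f a (x + s) - b)))
      with ((f (x - s) * f (x + s)) * ((ratio f a (x - s) - b) * (ratio f a (x + s) - b)))
      by ring.
    apply Rmult_pos_neg; [nra | lra].
Qed.

Lemma three_switches_of_sign_changes b e p1 q1 p2 q2 p3 q3 : 0 < b -> e <= m -> e < 1 ->
  0 <= p1 -> p1 < q1 -> q1 <= p2 -> p2 < q2 -> q2 <= p3 -> p3 < q3 -> q3 <= e ->
  (ratio f a p1 - b) * (ratio f a q1 - b) < 0 -> (ratio f a p2 - b) * (ratio f a q2 - b) < 0 ->
  (ratio f a p3 - b) * (ratio f a q3 - b) < 0 ->
  exists b', 0 < b' /\ has_switches (self_diff f a b') 0 m 3.
Proof.
  intros Hb Hem He1 H0 H1 H2 H3 H4 H5 H6 C1 C2 C3. destruct m_bounds as [Hm Ham].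
  destruct (common_clean_level (ratio f a) (ratio_deriv f a) 0 e b p1 q1 p2 q2 p3 q3)
    as [b' [Hb' [x1 [x2 [x3 [K1 [K2 K3]]]]]]]; auto.
  { intros x Hx. apply (ratio_cont f Hf a); lra. }
  { intros x Hx. assert (a * x < 1) by (pose proof (scaled_in x ltac:(lra)); nra).
    split; [apply (ratio_right_deriv f Hf a Ha) | apply (ratio_deriv_right_cont f Hf a Ha)]; lra. }
  exists b'. split; [exact Hb'|].
  pose proof (proj1 K1). pose proof (proj1 K2). pose proof (proj1 K3).
  exists ((x1, x1) :: (x2, x2) :: (x3, x3) :: nil). split; [|split; [reflexivity|]].
  - constructor; [simpl; intros [E|[E|E]]; [injection E | injection E | exact E]; lra|].
    constructor; [simpl; intros [E|E]; [injection E; lra | exact E]|].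
    constructor; [simpl; auto | constructor].
  - constructor; [apply (switch_of_clean_crossing b' p1 q1 x1 e); auto; lra|].
    constructor; [apply (switch_of_clean_crossing b' p2 q2 x2 e); auto; lra|].
    constructor; [apply (switch_of_clean_crossing b' p3 q3 x3 e); auto; lra|].
    constructor.
Qed.

(* With [u_i = c_i - t] and [v_i = d_i + t], [ratio - b] changes sign on [[u1, v1]], on
   [[u2, v2]] and between [0] and [e], hence also on one of the gaps. *)
Lemma three_switches_of_two b c1 d1 c2 d2 : 0 < b ->
  sign_switch (self_diff f a b) 0 m c1 d1 -> sign_switch (self_diff f a b) 0 m c2 d2 -> d1 < c2 ->
  exists b', 0 < b' /\ has_switches (self_diff f a b') 0 m 3.
Proof.
  intros Hb S1 S2 Hord.
  pose proof (proj1 S1) as Hcd1. pose proof (proj1 S2) as Hcd2.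
  destruct (switch_ratio_sign_change b c1 d1 S1) as [e1 [He1 W1]].
  destruct (switch_ratio_sign_change b c2 d2 S2) as [e2 [He2 W2]].
  set (t := Rmin (Rmin e1 e2) (c2 - d1) / 3).
  assert (Ht : 0 < t /\ t < e1 /\ t < e2 /\ 2 * t < c2 - d1)
    by (unfold t, Rmin; repeat destruct Rle_dec; lra).
  destruct (W1 t ltac:(lra)) as (Hu1 & Hv1 & C1). destruct (W2 t ltac:(lra)) as (Hu2 & Hv2 & C2).
  destruct (ratio_far_side b (d2 + t) Hb (switch_levels b c1 d1 S1) ltac:(lra))
    as [e [He [He1' C0]]].
  rewrite <- (ratio_0 f Hf a) in C0.
  destruct (sign_change_parity _ _ _ _ _ _ C0 C1 C2) as [C|[C|C]].
  - apply (three_switches_of_sign_changes b e 0 (c1 - t) (c1 - t) (d1 + t) (c2 - t) (d2 + t));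
      auto; lra.
  - apply (three_switches_of_sign_changes b e
             (c1 - t) (d1 + t) (d1 + t) (c2 - t) (c2 - t) (d2 + t));
      auto; lra.
  - apply (three_switches_of_sign_changes b e (c1 - t) (d1 + t) (c2 - t) (d2 + t) (d2 + t) e);
      auto; lra.
Qed.

End SelfCrossing.

Lemma crossing_ext (f g1 g2 : R -> R) : (forall x, 0 <= x <= 1 -> g1 x = g2 x) ->
  crossing f g1 = crossing f g2.
Proof.
  intros E. unfold crossing. apply Lub_Rbar_eqset. intros r.
  split; intros [n [a [b (Ha & Hb & Hr & Hs)]]]; exists n, a, b;
    (split; [exact Ha|]); (split; [exact Hb|]); (split; [exact Hr|]);
    (eapply has_switches_ext; [|exact Hs]); intros x Hx; pose proof (Rmin_l 1 (/ a));
    cbv beta; rewrite E by lra; reflexivity.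
Qed.

(* Two switches of [f(a.) - b f] can always be upgraded to three, so the supremum is never 2. *)
Lemma crossing_self_ne_2 (f : R -> R) : inD f -> crossing f f <> Finite 2.
Proof.
  intros Hf Hc. unfold crossing in Hc.
  match type of Hc with Lub_Rbar ?E = _ => destruct (Lub_Rbar_correct E) as [Hub Hlub] end.
  rewrite Hc in Hub, Hlub.
  assert (Ex : exists n a b, 0 < a /\ 0 < b /\ (2 <= n)%nat /\
                 has_switches (self_diff f a b) 0 (Rmin 1 (/ a)) n).
  { apply NNPP. intros Hno. assert (K : Rbar_le 2 1); [|simpl in K; lra].
    apply Hlub. intros r [n [a [b (Ha & Hb & -> & Hs)]]]. simpl.
    destruct (Compare_dec.le_lt_dec 2 n) as [Hn|Hn].
    - exfalso. apply Hno. exists n, a, b. auto.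
    - apply (le_INR n 1). lia. }
  destruct Ex as [n [a [b (Ha & Hb & Hn & Hs)]]].
  destruct (two_switches _ _ _ _ Hn Hs) as [c1 [d1 [c2 [d2 [S1 [S2 Hord]]]]]].
  destruct (three_switches_of_two f Hf a Ha b c1 d1 c2 d2 Hb S1 S2 Hord) as [b' [Hb' H3]].
  assert (K : Rbar_le 3 2); [|simpl in K; lra].
  apply Hub. exists 3%nat, a, b'. repeat split; auto. simpl. ring.
Qed.

(** * The hammock inequality *)

Lemma hammock_pointwise_le y p q c t : 0 < y < 1 -> t <= p -> t <= c * q ->
  y * p - c * (y * q) <= p - t.
Proof. intros Hy Hp Hq. destruct (Rlt_dec p (c * q)); nra. Qed.

Lemma hammock_pointwise_lt y p q c t : 0 < y < 1 -> t <= p -> t <= c * q -> p <> c * q ->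
  y * p - c * (y * q) < p - t.
Proof. intros Hy Hp Hq Hne. destruct (Rlt_dec p (c * q)); nra. Qed.

Section Hammock.
Variables ft f g : R -> R.
Hypothesis Hft : decr_homeo ft.
Hypothesis Hf : decr_homeo f.
Hypothesis Hg : decr_homeo g.

Lemma finv_le_of_le : (forall x, 0 <= x <= 1 -> ft x <= f x) ->
  forall y, 0 <= y <= 1 -> finv ft y <= finv f y.
Proof.
  intros Hle y Hy. destruct (finv_spec ft Hft y Hy) as [Hx Hfx].
  destruct (finv_spec f Hf y Hy) as [Hx' Hfx'].
  apply Rnot_lt_le. intros Hlt. pose proof (decr_lt f Hf _ _ Hx' Hx Hlt).
  pose proof (Hle (finv ft y) Hx). lra.
Qed.

Lemma finv_le_of_le_scaled c : 1 <= c -> (forall x, 0 <= x <= 1 -> ft x <= g (x / c)) ->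
  forall y, 0 <= y <= 1 -> finv ft y <= c * finv g y.
Proof.
  intros Hc Hle y Hy. destruct (finv_spec ft Hft y Hy) as [Hx Hfx].
  destruct (finv_spec g Hg y Hy) as [Hz Hgz].
  set (x := finv ft y) in *. set (z := finv g y) in *.
  assert (Hxc : 0 <= x / c <= 1).
  { split; [apply Rdiv_le_0_compat; lra|].
    apply (Rmult_le_reg_r c); [lra|]. unfold Rdiv. rewrite Rmult_assoc, Rinv_l by lra. nra. }
  apply Rnot_lt_le. intros Hlt.
  assert (Hzx : z < x / c).
  { apply (Rmult_lt_reg_l c); [lra|]. unfold Rdiv. rewrite <- Rmult_assoc, (Rmult_comm c x),
      Rmult_assoc, Rinv_r by lra. lra. }
  pose proof (decr_lt g Hg _ _ Hz Hxc Hzx). pose proof (Hle x Hx). lra.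
Qed.

Lemma eq_of_finv_scaled c : (forall y, 0 < y < 1 -> finv f y = c * finv g y) ->
  forall x, 0 <= x <= 1 -> g x = f x.
Proof.
  intros E.
  assert (Hc : c = 1).
  { set (k := fun y => ext01 (finv f) y - c * ext01 (finv g) y).
    assert (Hk : k 0 = 0).
    { apply right_lim_zero_at_0.
      - apply continuity_pt_minus; [|apply continuity_pt_mult; [apply continuity_pt_cst|]];
          apply ext01_continuity_pt, finv_cont; auto.
      - intros t Ht. unfold k. rewrite !ext01_eq by lra. rewrite E by lra. ring. }
    unfold k in Hk. rewrite !ext01_eq, (finv_0 f Hf), (finv_0 g Hg) in Hk by lra. lra. }
  subst c. intros x Hx. destruct (decr_range f Hf x Hx) as [H0 H1].
  destruct (Req_dec (f x) 0) as [E0|E0]; [|destruct (Req_dec (f x) 1) as [E1|E1]].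
  - replace x with 1 by (apply (decr_inj f Hf); [lra | exact Hx | rewrite (decr_1 f Hf); auto]).
    rewrite (decr_1 f Hf), (decr_1 g Hg). reflexivity.
  - replace x with 0 by (apply (decr_inj f Hf); [lra | exact Hx | rewrite (decr_0 f Hf); auto]).
    rewrite (decr_0 f Hf), (decr_0 g Hg). reflexivity.
  - specialize (E (f x) ltac:(lra)). rewrite (finv_f f Hf x Hx), Rmult_1_l in E.
    rewrite E at 1. apply (finv_spec g Hg). lra.
Qed.

Lemma hammock_integral c :
  (forall y, 0 <= y <= 1 -> finv ft y <= finv f y) ->
  (forall y, 0 <= y <= 1 -> finv ft y <= c * finv g y) ->
  (exists y, 0 < y < 1 /\ finv f y <> c * finv g y) ->
  RInt (fun y => y * finv f y) 0 1 - c * RInt (fun y => y * finv g y) 0 1 <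
  RInt (finv f) 0 1 - RInt (finv ft) 0 1.
Proof.
  intros Hle1 Hle2 [y0 [Hy0 Hne]].
  set (hf := ext01 (finv f)). set (hg := ext01 (finv g)). set (ht := ext01 (finv ft)).
  assert (Cf : forall x, continuity_pt hf x) by apply (ext01_continuity_pt _ (finv_cont f Hf)).
  assert (Cg : forall x, continuity_pt hg x) by apply (ext01_continuity_pt _ (finv_cont g Hg)).
  assert (Ct : forall x, continuity_pt ht x) by apply (ext01_continuity_pt _ (finv_cont ft Hft)).
  assert (Cyf : forall x, continuity_pt (fun y => y * hf y) x)
    by (intro; apply continuity_pt_mult; [apply continuity_pt_id | auto]).
  assert (Cyg : forall x, continuity_pt (fun y => y * hg y) x)
    by (intro; apply continuity_pt_mult; [apply continuity_pt_id | auto]).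
  assert (E : forall k, RInt (fun y => y * k y) 0 1 = RInt (fun y => y * ext01 k y) 0 1).
  { intros k. apply RInt_ext. intros x Hx. rewrite Rmin_left, Rmax_right in Hx by lra.
    rewrite ext01_eq by lra. reflexivity. }
  rewrite (E (finv f)), (E (finv g)), <- (RInt_ext01 (finv f)), <- (RInt_ext01 (finv ft)).
  fold hf hg ht.
  assert (Ccg : forall x, continuity_pt (fun y => c * (y * hg y)) x)
    by (intro; apply continuity_pt_mult; [apply continuity_pt_cst | auto]).
  assert (L1 : RInt (fun y => y * hf y - c * (y * hg y)) 0 1 =
               RInt (fun y => y * hf y) 0 1 - c * RInt (fun y => y * hg y) 0 1).
  { change (c * RInt (fun y => y * hg y) 0 1) with (scal c (RInt (fun y => y * hg y) 0 1)).
    rewrite <- (RInt_scal (fun y => y * hg y) 0 1 c (ex_RInt_cont _ 0 1 Cyg)).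
    exact (RInt_minus _ _ 0 1 (ex_RInt_cont _ 0 1 Cyf) (ex_RInt_cont _ 0 1 Ccg)). }
  assert (L2 : RInt (fun y => hf y - ht y) 0 1 = RInt hf 0 1 - RInt ht 0 1)
    by exact (RInt_minus _ _ 0 1 (ex_RInt_cont _ 0 1 Cf) (ex_RInt_cont _ 0 1 Ct)).
  rewrite <- L1, <- L2.
  apply (RInt_lt_at (fun y => y * hf y - c * (y * hg y)) (fun y => hf y - ht y)
                    (fun x => continuity_pt_minus _ _ x (Cyf x) (Ccg x))
                    (fun x => continuity_pt_minus _ _ x (Cf x) (Ct x)) 0 1 y0 Hy0).
  - intros t Ht. cbv beta. unfold hf, hg, ht. rewrite !ext01_eq by lra.
    apply hammock_pointwise_le; [lra | apply Hle1; lra | apply Hle2; lra].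
  - cbv beta. unfold hf, hg, ht. rewrite !ext01_eq by lra.
    apply hammock_pointwise_lt; [lra | apply Hle1; lra | apply Hle2; lra | exact Hne].
Qed.

End Hammock.

Theorem lemma4p6 (ft f g : R -> R) :
  inD ft -> inD f -> inD g ->
  dominated g f ->
  (forall x, 0 <= x <= 1 -> ft x <= f x) ->
  (let c := RInt f 0 1 / RInt g 0 1 in
   forall x, 0 <= x <= 1 -> ft x <= g (x / c)) ->
  RInt (T f) 0 1 - RInt (T g) 0 1 < 1 - RInt ft 0 1 / RInt f 0 1.
Proof.
  intros Hft Hf Hg [Hcross Hgf] Hle Hc. cbv zeta in Hc.
  pose proof (inD_decr_homeo ft Hft) as Dft. pose proof (inD_decr_homeo f Hf) as Df.
  pose proof (inD_decr_homeo g Hg) as Dg.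
  set (F := RInt f 0 1) in *. set (G := RInt g 0 1) in *. set (c := F / G) in *.
  assert (HF : 0 < F) by apply (RInt_pos f Df).
  assert (HG : 0 < G) by apply (RInt_pos g Dg).
  assert (Hc1 : 1 <= c).
  { assert (G <= F) by (apply RInt_le01; [apply (decr_cont g Dg) | apply (decr_cont f Df) | auto]).
    unfold c. apply (Rmult_le_reg_r G); [lra|]. field_simplify; lra. }
  assert (Hne : exists y, 0 < y < 1 /\ finv f y <> c * finv g y).
  { apply NNPP. intros Hno. apply (crossing_self_ne_2 f Hf). rewrite <- Hcross.
    apply crossing_ext. intros x Hx. symmetry. revert x Hx. apply (eq_of_finv_scaled f g Df Dg c).
    intros y Hy. apply NNPP. intros Hneq. apply Hno. exists y. auto. }
  pose proof (hammock_integral ft f g Dft Df Dg c (finv_le_of_le ft f Dft Df Hle)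
    (finv_le_of_le_scaled ft g Dft Dg c Hc1 Hc) Hne) as Key.
  rewrite (RInt_finv f Df) in Key. fold F in Key.
  rewrite (RInt_T f Df), (RInt_T g Dg), <- (RInt_finv ft Dft). fold F G.
  replace (_ / F - _ / G) with
    ((RInt (fun y => y * finv f y) 0 1 - c * RInt (fun y => y * finv g y) 0 1) / F)
    by (unfold c; field; lra).
  replace (1 - _ / F) with ((F - RInt (finv ft) 0 1) / F) by (field; lra).
  unfold Rdiv. apply Rmult_lt_compat_r; [apply Rinv_0_lt_compat|]; lra.
Qed.
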